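(* Consider the $L$-user Broadcast Malayter-Chance-Love (BMCL) scheme described in the context, with perfect feedback ($\sigma_f^2=0$) and broadcast SNR $P/\sigma_b^2$. Its maximum (symmetric) sum rate is $$C_{sum}\left(\frac{P}{\sigma_b^2}\right)=-L\log_2(\beta_\infty),$$ where $\beta_\infty\in(0,1)$ is the value of $\beta$ satisfying $$\frac{(1-\beta^{2L})^2}{L^2\beta^{2L}(1-\beta^2)}=\frac{P}{\sigma_b^2 L}.$$
   Context: Channel: real $L$-user AWGN broadcast channel with feedback. At channel use $t$ the transmitter sends $x[t]\in\mathbb{R}$, receiver $\ell$ observes $y_\ell[t]=x[t]+n^b_\ell[t]$ with $n^b_\ell[t]\sim\mathcal{N}(0,\sigma_b^2)$ i.i.d., and feeds back $z_\ell[t]=y_\ell[t]+n^f_\ell[t]$, $n^f_\ell[t]\sim\mathcal{N}(0,\sigma_f^2)$ i.i.d.; perfect feedback means $\sigma_f^2=0$. Average power constraint $\frac1N\mathbb{E}\sum_{t=1}^N x[t]^2\le P$. Each user $\ell$ has a message of $K_\ell=NR_\ell$ bits, all users have equal rate $R_\ell$, and the sum rate is $R_{sum}=LR_\ell$. BMCL scheme ($L$ a power of $2$, blocklength $N$, $\hat N=N-L$, power sharing parameter $\gamma\in(0,1)$): user $\ell$'s message is mapped to a uniformly distributed PAM symbol $\Theta_\ell$ with $\mathbb{E}|\Theta_\ell|^2=(1-\gamma)NP/L$; in the first $L$ channel uses $x[t]=\Theta_t$, and the remaining $\hat N$ uses carry linear feedback-based noise cancellation. For $\beta\in(0,1)$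 the base encoding matrix $\mathbf{F}\in\mathbb{R}^{(\hat N+1)\times(\hat N+1)}$ has entries $\mathbf{F}[t,m]=0$ for $t\le m$ and $\mathbf{F}[t,m]=\frac{-(1-\beta^{2L})}{L\beta}\beta^{L\lfloor (t-m-1)/L\rfloor-\mathrm{mod}(t-m-1,L)}$ for $t>m$. For user $\ell$, $\mathbf{C}_\ell$ is the $(\hat N+1)\times(\hat N+1)$ diagonal matrix whose $i$-th diagonal entry is the entry in position $\mathrm{mod}(i,L)$ (positions counted cyclically) of the $\ell$-th row $\mathbf{c}_\ell$ of an $L\times L$ Hadamard matrix; user $\ell$'s encoding matrix is $\mathbf{F}_\ell=\mathbf{C}_\ell\mathbf{F}\mathbf{C}_\ell^T$. Receiver $\ell$ sees $\mathbf{y}_\ell=\mathbf{e}_1\Theta_\ell+(\mathbf{I}+\mathbf{F}_\ell)\mathbf{n}^b_\ell+\mathbf{F}_\ell\mathbf{n}^f_\ell+\sum_{\ell'\ne\ell}\mathbf{F}_{\ell'}(\mathbf{n}^b_{\ell'}+\mathbf{n}^f_{\ell'})$ and estimates $\hat\Theta_\ell=\mathbf{q}^T\mathbf{C}_\ell\mathbf{y}_\ell$ with the (asymptotic) combiner $\mathbf{q}=[1,\beta,\beta^2,\dots,\beta^{\hat N}]^T$. For fixed $\gamma$, $\beta=\beta(\gamma)\in(0,1)$ is chosen to satisfy $\frac{(1-\beta^{2L})^2}{L^2\beta^{2L}(1-\beta^2)}=\frac{P\gamma}{L(\sigma_b^2+\sigma_f^2)}$. The output SNR of user $\ell$ is $$SNR_\ell(\gamma)=\frac{\frac1L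 PN(1-\gamma)}{\sigma_b^2\|\mathbf{q}^T(\mathbf{I}+\mathbf{F})\|_2^2+(\sigma_b^2+\sigma_f^2)\sum_{i\ne\ell}\|\mathbf{q}^T\mathbf{C}_\ell\mathbf{C}_i\mathbf{F}\|_2^2+\sigma_f^2\|\mathbf{q}^T\mathbf{F}\|_2^2},$$ and its average block error rate is $\mathbb{P}_{e,\ell}=2\left(1-\frac{1}{2^{2NR_\ell}}\right)Q\left(\sqrt{\frac{6}{2^{2NR_\ell}-1}SNR_\ell(\gamma)}\right)$, where $Q$ is the standard Gaussian tail function. A per-user rate $R_\ell$ is achievable if for some $\gamma\in(0,1)$, $\mathbb{P}_{e,\ell}\to0$ as $N\to\infty$; the maximum sum rate $C_{sum}(P/\sigma_b^2)$ is the supremum of $LR_\ell$ over achievable $R_\ell$. *)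

From Stdlib Require Import Reals ZArith Arith.
From Coquelicot Require Import Coquelicot.
Open Scope R_scope.

(* All vectors/matrices
   of the BMCL scheme have size Nhat+1 and are indexed 0..Nhat (0-based;
   0-based index t corresponds to the paper's 1-based index t+1). *)

Definition log2 (x : R) : R := ln x / ln 2.

Definition Qfun (x : R) : R :=
  RInt_gen (fun t => exp (- (t ^ 2) / 2) / sqrt (2 * PI))
           (at_point x) (Rbar_locally p_infty).

Definition is_hadamard (L : nat) (H : nat -> nat -> R) : Prop :=
  (forall i j, (i < L)%nat -> (j < L)%nat -> H i j = 1 \/ H i j = -1) /\
  (forall i j, (i < L)%nat -> (j < L)%nat ->
     sum_n (fun k => H i k * H j k) (L - 1) = if Nat.eqb i j then INR L else 0).

(* The exponent may be negative, hence an integer power. *)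
Definition Fent (L : nat) (beta : R) (t m : nat) : R :=
  if Nat.ltb m t then
    - (1 - beta ^ (2 * L)) / (INR L * beta) *
    powerRZ beta (Z.of_nat L * Z.of_nat ((t - m - 1) / L) - Z.of_nat ((t - m - 1) mod L))%Z
  else 0.

(* i-th diagonal entry of C_l : entry of row l of H in position i counted
   cyclically (0-based: position i mod L). *)
Definition cdiag (L : nat) (H : nat -> nat -> R) (l i : nat) : R := H l (i mod L).

Definition qv (beta : R) (t : nat) : R := beta ^ t.

Definition kron (t m : nat) : R := if Nat.eqb t m then 1 else 0.

Definition nrm_IF (L Nh : nat) (beta : R) : R :=
  sum_n (fun m => (sum_n (fun t => qv beta t * (kron t m + Fent L beta t m)) Nh) ^ 2) Nh.

Definition nrm_CCF (L Nh : nat) (H : nat -> nat -> R) (beta : R) (l i : nat) : R :=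
  sum_n (fun m => (sum_n (fun t => qv beta t * cdiag L H l t * cdiag L H i t
                                    * Fent L beta t m) Nh) ^ 2) Nh.

Definition nrm_F (L Nh : nat) (beta : R) : R :=
  sum_n (fun m => (sum_n (fun t => qv beta t * Fent L beta t m) Nh) ^ 2) Nh.

Definition SNR (L : nat) (H : nat -> nat -> R) (P sb2 sf2 beta gamma : R)
    (N l : nat) : R :=
  let Nh := (N - L)%nat in
  (/ INR L * P * INR N * (1 - gamma)) /
  (sb2 * nrm_IF L Nh beta
   + (sb2 + sf2) * sum_n (fun i => if Nat.eqb i l then 0 else nrm_CCF L Nh H beta l i) (L - 1)
   + sf2 * nrm_F L Nh beta).

Definition Pe (L : nat) (H : nat -> nat -> R) (P sb2 sf2 beta gamma Rl : R)
    (N l : nat) : R :=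
  let M2 := Rpower 2 (2 * INR N * Rl) in
  2 * (1 - 1 / M2) * Qfun (sqrt (6 / (M2 - 1) * SNR L H P sb2 sf2 beta gamma N l)).

Definition beta_eq (L : nat) (b rhs : R) : Prop :=
  (1 - b ^ (2 * L)) ^ 2 / (INR L ^ 2 * b ^ (2 * L) * (1 - b ^ 2)) = rhs.

Definition achievable (L : nat) (H : nat -> nat -> R) (P sb2 sf2 Rl : R) : Prop :=
  0 < Rl /\
  exists gamma, 0 < gamma < 1 /\
  exists beta, 0 < beta < 1 /\
    beta_eq L beta (P * gamma / (INR L * (sb2 + sf2))) /\
    forall l, (l < L)%nat ->
      is_lim_seq (fun N => Pe L H P sb2 sf2 beta gamma Rl N l) (Finite 0).

(* set of achievable sum rates L * Rl; C_sum is its supremum *)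
Definition sum_rates (L : nat) (H : nat -> nat -> R) (P sb2 sf2 : R) (s : R) : Prop :=
  exists Rl, achievable L H P sb2 sf2 Rl /\ s = INR L * Rl.

(* With perfect feedback, every noise term seen by receiver [l] is a column sum of
   [q^T (I + F)] or of [q^T C_l C_i F].  In the first, the [F]-part is a geometric series in
   [b^(2L)] that cancels the leading [1] up to [b^(2L floor((Nh-m)/L))]; in the second, every
   full period of [L] positions contributes the inner product of two distinct Hadamard rows,
   i.e. nothing.  So all column sums are [O(b^Nh)] while the last one equals [b^Nh], and
   [c1 b^(-2N) <= SNR_l <= c2 N b^(-2N)].  The error probability, a Gaussian tail at
   [sqrt (6 SNR_l / (2^(2NR) - 1))], thus vanishes when [2^(2R) b^2 < 1] and stays away from 0
   when [2^(2R) b^2 > 1]: the threshold rate is [-log2 b].  Finally, the left side of the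
   beta-equation is decreasing on (0,1) (it is a sum of the decreasing terms [u^(-k) - u^(k-1)],
   [u = b^2]), so [gamma < 1] forces [beta(gamma) > binf], while every beta in (binf, 1) arises
   from some [gamma < 1]; hence the supremum of [L R] is [-L log2 binf]. *)

From Stdlib Require Import Reals Lra Lia.
From Coquelicot Require Import Coquelicot.
Open Scope R_scope.

(** * The Gaussian tail function *)

Section NonnegativeImproperIntegral.
Variables (f : R -> R) (a B : R).
Hypothesis f_ge0 : forall t, 0 <= f t.
Hypothesis f_int : forall x y, ex_RInt f x y.
Hypothesis RInt_le_B : forall y, a <= y -> RInt f a y <= B.

Definition partial_integrals (v : R) : Prop := exists y, a <= y /\ v = RInt f a y.

Lemma RInt_nondecreasing y z : a <= y <= z -> RInt f a y <= RInt f a z.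
Proof.
  intros Hyz. rewrite <- (RInt_Chasles f a y z) by apply f_int.
  assert (0 <= RInt f y z) by (apply RInt_ge_0; [lra | apply f_int | auto]).
  unfold plus; simpl; lra.
Qed.

Lemma is_RInt_gen_lub l :
  is_lub partial_integrals l -> is_RInt_gen f (at_point a) (Rbar_locally p_infty) l.
Proof.
  intros [Hub Hleast] P [eps Heps].
  assert (Hy0 : exists y0, a <= y0 /\ l - eps < RInt f a y0).
  { apply Classical_Prop.NNPP; intros Hnone.
    assert (Hl : l <= l - eps).
    { apply Hleast. intros v [y [Hy ->]].
      apply Rnot_lt_le; intros Hlt. apply Hnone. exists y; auto. }
    pose proof (cond_pos eps); lra. }
  destruct Hy0 as [y0 [Hay0 Hy0]].
  apply Filter_prod with (fun x => x = a) (fun y => y0 < y); [reflexivity | exists y0; auto |].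
  intros x y -> Hy. exists (RInt f a y).
  split; [apply (@RInt_correct R_CompleteNormedModule), f_int |].
  apply Heps. change (Rabs (RInt f a y - l) < eps).
  assert (RInt f a y <= l) by (apply Hub; exists y; split; [lra | auto]).
  assert (RInt f a y0 <= RInt f a y) by (apply RInt_nondecreasing; lra).
  apply Rabs_def1; lra.
Qed.

Lemma RInt_gen_is_lub :
  is_lub partial_integrals (RInt_gen f (at_point a) (Rbar_locally p_infty)).
Proof.
  destruct (completeness partial_integrals) as [l Hl].
  - exists B. intros v [y [Hy ->]]. auto.
  - exists (RInt f a a). exists a. split; [lra | auto].
  - rewrite (is_RInt_gen_unique f l); auto. apply is_RInt_gen_lub; auto.
Qed.
End NonnegativeImproperIntegral.

Lemma exp_le_exp x y : x <= y -> exp x <= exp y.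
Proof. intros [Hlt | ->]; [left; apply exp_increasing | right]; auto. Qed.

Definition gauss (t : R) : R := exp (- (t ^ 2) / 2) / sqrt (2 * PI).

Lemma sqrt_2PI_ge1 : 1 <= sqrt (2 * PI).
Proof. rewrite <- sqrt_1. apply sqrt_le_1_alt. pose proof PI2_3_2. lra. Qed.

Lemma gauss_pos t : 0 < gauss t.
Proof. apply Rdiv_lt_0_compat; [apply exp_pos | pose proof sqrt_2PI_ge1; lra]. Qed.

Lemma ex_RInt_gauss x y : ex_RInt gauss x y.
Proof.
  apply (@ex_RInt_continuous R_CompleteNormedModule); intros t _.
  apply (@ex_derive_continuous R_AbsRing R_NormedModule). unfold gauss. auto_derive. auto.
Qed.

Lemma gauss_le_exp t : gauss t <= exp (/ 2 - t).
Proof.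
  pose proof sqrt_2PI_ge1. pose proof (exp_pos (- (t ^ 2) / 2)).
  apply Rle_trans with (exp (- (t ^ 2) / 2)).
  - unfold gauss. apply Rmult_le_reg_r with (sqrt (2 * PI)); [lra |].
    unfold Rdiv. rewrite Rmult_assoc, Rinv_l by lra. nra.
  - apply exp_le_exp. pose proof (pow2_ge_0 (t - 1)). lra.
Qed.

Lemma RInt_exp_shift x y : RInt (fun t => exp (/ 2 - t)) x y = exp (/ 2 - x) - exp (/ 2 - y).
Proof.
  apply is_RInt_unique.
  replace (exp (/ 2 - x) - exp (/ 2 - y))
    with (minus (- exp (/ 2 - y)) (- exp (/ 2 - x))) by (unfold minus, plus, opp; simpl; ring).
  apply (is_RInt_derive (fun t => - exp (/ 2 - t))).
  - intros t _. auto_derive; auto. unfold Rminus; ring.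
  - intros t _. apply (@ex_derive_continuous R_AbsRing R_NormedModule). auto_derive. auto.
Qed.

Lemma RInt_gauss_le_exp x y : x <= y -> RInt gauss x y <= exp (/ 2 - x).
Proof.
  intros Hxy. apply Rle_trans with (RInt (fun t => exp (/ 2 - t)) x y).
  - apply RInt_le; auto using ex_RInt_gauss.
    + apply (@ex_RInt_continuous R_CompleteNormedModule); intros t _.
      apply (@ex_derive_continuous R_AbsRing R_NormedModule). auto_derive. auto.
    + intros; apply gauss_le_exp.
  - rewrite RInt_exp_shift. pose proof (exp_pos (/ 2 - y)). lra.
Qed.

Lemma Qfun_is_lub x : is_lub (partial_integrals gauss x) (Qfun x).
Proof.
  apply (RInt_gen_is_lub gauss x (exp (/ 2 - x))).
  - intros t; left; apply gauss_pos.
  - apply ex_RInt_gauss.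
  - apply RInt_gauss_le_exp.
Qed.

Lemma RInt_gauss_le_Qfun x y : x <= y -> RInt gauss x y <= Qfun x.
Proof. intros Hxy. apply Qfun_is_lub. exists y; auto. Qed.

Lemma Qfun_ge0 x : 0 <= Qfun x.
Proof.
  apply Rle_trans with (RInt gauss x (x + 1)); [| apply RInt_gauss_le_Qfun; lra].
  apply RInt_ge_0; [lra | apply ex_RInt_gauss | intros; left; apply gauss_pos].
Qed.

Lemma Qfun_le_exp x : Qfun x <= exp (/ 2 - x).
Proof.
  apply Qfun_is_lub. intros v [y [Hy ->]]. apply RInt_gauss_le_exp; auto.
Qed.

Lemma Qfun_ge_gauss2 x : 0 <= x <= 1 -> gauss 2 <= Qfun x.
Proof.
  intros Hx. eapply Rle_trans; [| apply (RInt_gauss_le_Qfun x (x + 1)); lra].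
  apply Rle_trans with (RInt (fun _ => gauss 2) x (x + 1)).
  - rewrite RInt_const. unfold scal; simpl; unfold mult; simpl. lra.
  - apply RInt_le; [lra | apply ex_RInt_const | apply ex_RInt_gauss |].
    intros t Ht. apply Rmult_le_compat_r.
    + left; apply Rinv_0_lt_compat. pose proof sqrt_2PI_ge1; lra.
    + apply exp_le_exp. nra.
Qed.

(** * Limits of the error probability *)

Lemma is_lim_seq_INR_mul_geom s : 0 < s < 1 -> is_lim_seq (fun N => INR N * s ^ N) 0.
Proof.
  intros Hs. set (r := sqrt s). set (h := / r - 1).
  assert (Hr : 0 < r < 1).
  { unfold r. split; [apply sqrt_lt_R0; lra |]. rewrite <- sqrt_1. apply sqrt_lt_1; lra. }
  assert (Hh : 0 < h).
  { unfold h. apply Rlt_0_minus. rewrite <- Rinv_1. apply Rinv_lt_contravar; lra. }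
  apply is_lim_seq_le_le with (fun _ => 0) (fun N => / h * r ^ N).
  - intros N. pose proof (pos_INR N). pose proof (pow_lt r N ltac:(lra)).
    assert (Hsr : s ^ N = r ^ N * r ^ N).
    { rewrite <- Rpow_mult_distr. unfold r. rewrite sqrt_sqrt; lra. }
    (* Bernoulli: [1 + N h <= (1 + h)^N = r^(-N)]. *)
    assert (Hbern : INR N * h * r ^ N <= 1).
    { pose proof (Rle_pow_lin h N ltac:(lra)) as Hb.
      replace (1 + h) with (/ r) in Hb by (unfold h; ring). rewrite pow_inv in Hb.
      apply Rmult_le_compat_r with (r := r ^ N) in Hb; [| lra].
      rewrite Rinv_l in Hb by lra. nra. }
    rewrite Hsr. split; [nra |].
    apply Rmult_le_reg_l with h; auto.
    replace (h * (/ h * r ^ N)) with (1 * r ^ N) by (field; lra).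
    replace (h * (INR N * (r ^ N * r ^ N))) with (INR N * h * r ^ N * r ^ N) by ring.
    apply Rmult_le_compat_r; lra.
  - apply is_lim_seq_const.
  - replace (Finite 0) with (Rbar_mult (/ h) 0) by (simpl; f_equal; ring).
    apply is_lim_seq_scal_l, is_lim_seq_geom. rewrite Rabs_pos_eq; lra.
Qed.

Lemma error_rate_vanishes (M2 z : nat -> R) :
  (forall N, 1 <= M2 N) -> is_lim_seq z p_infty ->
  is_lim_seq (fun N => 2 * (1 - 1 / M2 N) * Qfun (sqrt (z N))) 0.
Proof.
  intros HM Hz.
  assert (Hsqrt : is_lim_seq (fun N => sqrt (z N)) p_infty).
  { apply (is_lim_comp_seq sqrt z p_infty p_infty); auto.
    - apply (is_lim_sqrt_p (fun t => t)), is_lim_id.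
    - exists O; intros; discriminate. }
  assert (Hexp : is_lim_seq (fun N => exp (/ 2 - sqrt (z N))) 0).
  { apply (is_lim_comp_seq exp _ m_infty 0);
      [apply is_lim_exp_m | exists O; intros; discriminate |].
    eapply is_lim_seq_minus; [apply is_lim_seq_const | apply Hsqrt | reflexivity]. }
  apply is_lim_seq_le_le with (fun _ => 0) (fun N => 2 * exp (/ 2 - sqrt (z N))).
  - intros N. specialize (HM N).
    assert (0 <= 1 - 1 / M2 N <= 1).
    { unfold Rdiv. rewrite Rmult_1_l. pose proof (Rinv_0_lt_compat (M2 N)).
      pose proof (Rinv_le_contravar 1 (M2 N)). rewrite Rinv_1 in *. lra. }
    pose proof (Qfun_ge0 (sqrt (z N))). pose proof (Qfun_le_exp (sqrt (z N))). nra.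
  - apply is_lim_seq_const.
  - replace (Finite 0) with (Rbar_mult 2 0) by (simpl; f_equal; ring).
    apply is_lim_seq_scal_l, Hexp.
Qed.

Lemma error_rate_not_vanishing (M2 z : nat -> R) :
  is_lim_seq M2 p_infty -> is_lim_seq z 0 ->
  ~ is_lim_seq (fun N => 2 * (1 - 1 / M2 N) * Qfun (sqrt (z N))) 0.
Proof.
  intros HM Hz Herr.
  apply is_lim_seq_spec in HM, Hz, Herr.
  destruct (HM 2) as [N1 HN1], (Hz (mkposreal 1 Rlt_0_1)) as [N2 HN2],
    (Herr (mkposreal _ (gauss_pos 2))) as [N3 HN3].
  set (N := Nat.max N1 (Nat.max N2 N3)).
  specialize (HN1 N ltac:(lia)). specialize (HN2 N ltac:(lia)). specialize (HN3 N ltac:(lia)).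
  simpl in HN2, HN3. rewrite Rminus_0_r in HN2, HN3.
  assert (Hs : 0 <= sqrt (z N) <= 1).
  { split; [apply sqrt_pos |]. rewrite <- sqrt_1. apply sqrt_le_1_alt.
    apply Rabs_def2 in HN2. lra. }
  pose proof (Qfun_ge_gauss2 _ Hs). pose proof (gauss_pos 2).
  assert (1 / 2 <= 1 - 1 / M2 N).
  { unfold Rdiv. rewrite !Rmult_1_l. pose proof (Rinv_le_contravar 2 (M2 N)). lra. }
  rewrite Rabs_pos_eq in HN3 by (apply Rmult_le_pos; [lra | apply Qfun_ge0]).
  nra.
Qed.

(** * Finite sums *)

(* Unlike [sum_n f n], which has [n + 1] terms, [psum f n] may be empty. *)
Fixpoint psum (f : nat -> R) (n : nat) : R :=
  match n with O => 0 | S n => psum f n + f n end.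

Lemma psum_S f n : psum f (S n) = psum f n + f n.
Proof. reflexivity. Qed.

Lemma sum_n_psum f n : sum_n f n = psum f (S n).
Proof.
  induction n as [| n IH].
  - rewrite sum_O. simpl. symmetry. apply Rplus_0_l.
  - rewrite sum_Sn, IH. reflexivity.
Qed.

Lemma psum_ext f g n : (forall j, (j < n)%nat -> f j = g j) -> psum f n = psum g n.
Proof.
  induction n as [| n IH]; intros Hfg; simpl; auto.
  rewrite IH, Hfg; auto.
Qed.

Lemma psum_plus f g n : psum (fun j => f j + g j) n = psum f n + psum g n.
Proof. induction n as [| n IH]; simpl; [ring | rewrite IH; ring]. Qed.

Lemma psum_const c n : psum (fun _ => c) n = INR n * c.
Proof. induction n as [| n IH]; simpl psum; [simpl; ring | rewrite IH, S_INR; ring]. Qed.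

Lemma psum_shift f n : psum (fun j => f (S j)) n = psum f n + f n - f O.
Proof. induction n as [| n IH]; simpl; [ring | rewrite IH; ring]. Qed.

Lemma psum_le f g n : (forall j, (j < n)%nat -> f j <= g j) -> psum f n <= psum g n.
Proof.
  induction n as [| n IH]; intros Hfg; simpl; [lra |].
  pose proof (Hfg n ltac:(lia)). pose proof (IH ltac:(intros; apply Hfg; lia)). lra.
Qed.

Lemma psum_lt f g n : (0 < n)%nat -> (forall j, (j < n)%nat -> f j < g j) -> psum f n < psum g n.
Proof.
  destruct n as [| n]; intros Hn Hfg; [lia |].
  rewrite !psum_S. pose proof (Hfg n ltac:(lia)).
  assert (psum f n <= psum g n) by (apply psum_le; intros j Hj; left; apply Hfg; lia).
  lra.
Qed.

Lemma psum_ge0 f n : (forall j, (j < n)%nat -> 0 <= f j) -> 0 <= psum f n.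
Proof.
  intros Hf. rewrite <- (Rmult_0_r (INR n)), <- psum_const. apply psum_le, Hf.
Qed.

Lemma psum_abs_le f n K :
  (forall j, (j < n)%nat -> Rabs (f j) <= K) -> Rabs (psum f n) <= INR n * K.
Proof.
  induction n as [| n IH]; intros Hf; simpl psum.
  - rewrite Rabs_R0. simpl. lra.
  - rewrite S_INR. eapply Rle_trans; [apply Rabs_triang |].
    pose proof (IH ltac:(intros; apply Hf; lia)). pose proof (Hf n ltac:(lia)). lra.
Qed.

Lemma psum_kron g m n : psum (fun t => g t * kron t m) n = if Nat.ltb m n then g m else 0.
Proof.
  induction n as [| n IH]; simpl psum; auto.
  rewrite IH. unfold kron.
  destruct (Nat.ltb_spec m n), (Nat.eqb_spec n m), (Nat.ltb_spec m (S n)); subst; try lia; ring.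
Qed.

Lemma psum_rotate (L : nat) (h : nat -> R) (a : nat) :
  (0 < L)%nat -> psum (fun j => h ((a + j) mod L)) L = psum h L.
Proof.
  intros HL. induction a as [| a IH].
  - apply psum_ext. intros j Hj. rewrite Nat.mod_small; auto.
  - rewrite <- IH, <- (Rplus_0_r (psum _ L)).
    rewrite (psum_ext _ (fun j => h ((a + S j) mod L))) by (intros; do 2 f_equal; lia).
    rewrite (psum_shift (fun j => h ((a + j) mod L))).
    replace (a + L)%nat with (a + 1 * L)%nat by lia.
    rewrite Nat.Div0.mod_add, Nat.add_0_r. ring.
Qed.

Lemma pow_le_pow_le1 b i j : 0 <= b <= 1 -> (i <= j)%nat -> b ^ j <= b ^ i.
Proof.
  intros Hb Hij. replace j with (i + (j - i))%nat by lia. rewrite pow_add.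
  pose proof (pow_le b i (proj1 Hb)). pose proof (pow_incr b 1 (j - i) Hb).
  rewrite pow1 in *. pose proof (pow_le b (j - i) (proj1 Hb)). nra.
Qed.

(** * Column sums of the encoding matrices *)

Section ColumnSums.
Variables (L : nat) (b : R).
Hypothesis L_pos : (0 < L)%nat.
Hypothesis b_range : 0 < b < 1.

Let c := 1 - b ^ (2 * L).

Lemma c_range : 0 < c <= 1.
Proof.
  unfold c. pose proof (pow_lt_1_compat b (2 * L) ltac:(lra) ltac:(lia)).
  pose proof (pow_le b (2 * L) ltac:(lra)). lra.
Qed.

Definition block_weight (d : nat) : R := b ^ (2 * L * (d / L)).

Definition column_tail (w : nat -> R) (m D : nat) : R :=
  psum (fun d => w (S (m + d)) * block_weight d) D.

(* With [t = m + 1 + L q + r], the exponent [t - 1 + L q - r] of [q_t F[t,m]] is [m + 2 L q]: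
   the entry only depends on the block index [q]. *)
Lemma qv_Fent_below m d :
  qv b (S (m + d)) * Fent L b (S (m + d)) m = - (c / INR L) * b ^ m * block_weight d.
Proof.
  pose proof (lt_0_INR L L_pos).
  unfold Fent, qv, block_weight. rewrite (proj2 (Nat.ltb_lt m (S (m + d)))) by lia.
  replace (S (m + d) - m - 1)%nat with d by lia.
  assert (Hexp : b ^ d * powerRZ b (Z.of_nat L * Z.of_nat (d / L) - Z.of_nat (d mod L))
                 = b ^ (2 * L * (d / L))).
  { rewrite !pow_powerRZ, <- powerRZ_add by lra. f_equal.
    pose proof (Nat.div_mod_eq d L). nia. }
  rewrite <- Hexp, <- tech_pow_Rmult, pow_add. unfold c. field. lra.
Qed.

Lemma column_sum_Fent (w : nat -> R) m d :
  psum (fun t => qv b t * w t * Fent L b t m) (S (m + d))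
  = - (c / INR L) * b ^ m * column_tail w m d.
Proof.
  induction d as [| d IH].
  - rewrite (psum_ext _ (fun _ => 0)), psum_const.
    + unfold column_tail. simpl. ring.
    + intros t Ht. unfold Fent. rewrite (proj2 (Nat.ltb_ge m t)) by lia. ring.
  - replace (S (m + S d)) with (S (S (m + d))) by lia.
    rewrite psum_S, IH. unfold column_tail. rewrite psum_S.
    replace (qv b (S (m + d)) * w (S (m + d)) * Fent L b (S (m + d)) m)
      with (w (S (m + d)) * (qv b (S (m + d)) * Fent L b (S (m + d)) m)) by ring.
    rewrite qv_Fent_below. ring.
Qed.

Lemma column_tail_block w m Q r : (r <= L)%nat ->
  column_tail w m (L * Q + r)
  = column_tail w m (L * Q) + b ^ (2 * L * Q) * psum (fun j => w (S (m + (L * Q + j)))) r.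
Proof.
  induction r as [| r IH]; intros Hr.
  - rewrite Nat.add_0_r. simpl. ring.
  - unfold column_tail in *. replace (L * Q + S r)%nat with (S (L * Q + r)) by lia.
    rewrite !psum_S, IH by lia. unfold block_weight.
    replace ((L * Q + r) / L)%nat with Q; [ring |].
    apply (Nat.div_unique _ _ _ r); lia.
Qed.

(* The geometric sum [c (1 + b^(2L) + ... + b^(2L(Q-1))) = 1 - b^(2LQ)] cancels the
   leading 1. *)
Lemma column_tail_ones m Q r : (r <= L)%nat ->
  1 - c / INR L * column_tail (fun _ => 1) m (L * Q + r)
  = b ^ (2 * L * Q) * (1 - c * INR r / INR L).
Proof.
  intros Hr. pose proof (lt_0_INR L L_pos).
  rewrite column_tail_block, psum_const by auto.
  enough (E : 1 - c / INR L * column_tail (fun _ => 1) m (L * Q) = b ^ (2 * L * Q))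
    by (rewrite <- E; field; lra).
  induction Q as [| Q IH].
  - rewrite !Nat.mul_0_r. unfold column_tail. simpl. ring.
  - replace (L * S Q)%nat with (L * Q + L)%nat by lia.
    replace (2 * L * S Q)%nat with (2 * L * Q + 2 * L)%nat by lia.
    rewrite column_tail_block, psum_const, pow_add, <- IH by lia.
    unfold c. field. lra.
Qed.

Lemma pow_block_le m Q r : (r < L)%nat ->
  b ^ m * b ^ (2 * L * Q) <= b ^ (m + (L * Q + r)) / b ^ L.
Proof.
  intros Hr. pose proof (pow_lt b L ltac:(lra)).
  apply Rmult_le_reg_r with (b ^ L); auto.
  replace (b ^ (m + (L * Q + r)) / b ^ L * b ^ L) with (b ^ (m + (L * Q + r))) by (field; lra).
  rewrite <- !pow_add. apply pow_le_pow_le1; [lra | nia].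
Qed.

Lemma column_IF_eq m d :
  sum_n (fun t => qv b t * (kron t m + Fent L b t m)) (m + d)
  = b ^ m * (1 - c / INR L * column_tail (fun _ => 1) m d) :> R.
Proof.
  rewrite sum_n_psum.
  rewrite (psum_ext _ (fun t => qv b t * kron t m + qv b t * 1 * Fent L b t m))
    by (intros; ring).
  rewrite psum_plus, psum_kron, column_sum_Fent.
  rewrite (proj2 (Nat.ltb_lt m (S (m + d)))) by lia.
  unfold qv. ring.
Qed.

Lemma column_IF_last Nh : sum_n (fun t => qv b t * (kron t Nh + Fent L b t Nh)) Nh = b ^ Nh :> R.
Proof.
  pose proof (column_IF_eq Nh 0) as E. rewrite Nat.add_0_r in E.
  rewrite E. unfold column_tail. simpl. ring.
Qed.

Lemma column_IF_bound m Nh : (m <= Nh)%nat ->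
  Rabs (sum_n (fun t => qv b t * (kron t m + Fent L b t m)) Nh) <= b ^ Nh / b ^ L.
Proof.
  intros Hm. pose proof (lt_0_INR L L_pos). pose proof c_range.
  set (Q := ((Nh - m) / L)%nat). set (r := ((Nh - m) mod L)%nat).
  assert (Hr : (r < L)%nat) by (apply Nat.mod_upper_bound; lia).
  assert (HNh : Nh = (m + (L * Q + r))%nat) by (pose proof (Nat.div_mod_eq (Nh - m) L); lia).
  rewrite HNh, column_IF_eq, column_tail_ones by lia.
  assert (Hr1 : 0 <= c * INR r / INR L <= 1).
  { assert (INR r <= INR L) by (apply le_INR; lia). pose proof (pos_INR r).
    split; [apply Rdiv_le_0_compat; nra |].
    apply Rmult_le_reg_r with (INR L); auto. unfold Rdiv.
    rewrite Rmult_assoc, Rinv_l by lra. nra. }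
  pose proof (pow_le b m ltac:(lra)) as Hbm. pose proof (pow_le b (2 * L * Q) ltac:(lra)) as HbQ.
  rewrite Rabs_pos_eq by (apply Rmult_le_pos; [| apply Rmult_le_pos]; lra).
  rewrite <- Rmult_assoc. eapply Rle_trans; [| apply (pow_block_le m Q r Hr)].
  pose proof (Rmult_le_pos _ _ Hbm HbQ). nra.
Qed.

Lemma nrm_IF_le Nh : nrm_IF L Nh b <= INR (S Nh) * (b ^ Nh / b ^ L) ^ 2.
Proof.
  unfold nrm_IF. rewrite sum_n_psum, <- psum_const. apply psum_le.
  intros m Hm. apply pow_maj_Rabs, column_IF_bound. lia.
Qed.

Lemma nrm_IF_ge Nh : (b ^ Nh) ^ 2 <= nrm_IF L Nh b.
Proof.
  unfold nrm_IF. rewrite sum_n_psum, psum_S, column_IF_last.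
  assert (0 <= psum (fun m => (sum_n (fun t => qv b t * (kron t m + Fent L b t m)) Nh) ^ 2) Nh)
    by (apply psum_ge0; intros; apply pow2_ge_0).
  lra.
Qed.

Section CrossTerms.
Variables (H : nat -> nat -> R) (l i : nat).
Hypothesis entries_le1 : forall k, (k < L)%nat -> Rabs (H l k * H i k) <= 1.
Hypothesis rows_orthogonal : sum_n (fun k => H l k * H i k) (L - 1) = 0.

Let cross (t : nat) : R := cdiag L H l t * cdiag L H i t.

(* Every window of [L] consecutive positions sees each column of [H] exactly once. *)
Lemma column_tail_cross_full m Q : column_tail cross m (L * Q) = 0.
Proof.
  induction Q as [| Q IH].
  - rewrite Nat.mul_0_r. reflexivity.
  - replace (L * S Q)%nat with (L * Q + L)%nat by lia.
    rewrite column_tail_block, IH by lia.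
    rewrite (psum_ext _ (fun j => (fun k => H l k * H i k) ((S (m + L * Q) + j) mod L)))
      by (intros; unfold cross, cdiag; do 3 f_equal; lia).
    pose proof (psum_rotate L (fun k => H l k * H i k) (S (m + L * Q)) L_pos) as Hrot.
    cbv beta in Hrot. rewrite Hrot.
    rewrite sum_n_psum in rows_orthogonal. replace (S (L - 1)) with L in rows_orthogonal by lia.
    rewrite rows_orthogonal. ring.
Qed.

Lemma column_CCF_bound m Nh : (m <= Nh)%nat ->
  Rabs (sum_n (fun t => qv b t * cdiag L H l t * cdiag L H i t * Fent L b t m) Nh)
  <= b ^ Nh / b ^ L.
Proof.
  intros Hm. pose proof (lt_0_INR L L_pos). pose proof c_range.
  set (Q := ((Nh - m) / L)%nat). set (r := ((Nh - m) mod L)%nat).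
  assert (Hr : (r < L)%nat) by (apply Nat.mod_upper_bound; lia).
  assert (HNh : Nh = (m + (L * Q + r))%nat) by (pose proof (Nat.div_mod_eq (Nh - m) L); lia).
  rewrite sum_n_psum, (psum_ext _ (fun t => qv b t * cross t * Fent L b t m))
    by (intros; unfold cross; ring).
  rewrite HNh at 1.
  rewrite column_sum_Fent, column_tail_block, column_tail_cross_full by lia.
  set (rest := psum (fun j => cross (S (m + (L * Q + j)))) r).
  assert (Hrest : Rabs rest <= INR L).
  { eapply Rle_trans; [apply (psum_abs_le _ _ 1) |].
    - intros j _. unfold cross, cdiag. apply entries_le1, Nat.mod_upper_bound. lia.
    - rewrite Rmult_1_r. apply le_INR. lia. }
  pose proof (pow_le b m ltac:(lra)) as Hbm. pose proof (pow_le b (2 * L * Q) ltac:(lra)) as HbQ.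
  replace (- (c / INR L) * b ^ m * (0 + b ^ (2 * L * Q) * rest))
    with (- (b ^ m * b ^ (2 * L * Q) * (c * rest / INR L))) by (field; lra).
  rewrite Rabs_Ropp, Rabs_mult, Rabs_pos_eq by (apply Rmult_le_pos; auto).
  rewrite HNh. eapply Rle_trans; [| apply (pow_block_le m Q r Hr)].
  assert (Rabs (c * rest / INR L) <= 1).
  { unfold Rdiv. rewrite !Rabs_mult, (Rabs_pos_eq c), Rabs_inv, (Rabs_pos_eq (INR L)) by lra.
    apply Rmult_le_reg_r with (INR L); auto.
    rewrite Rmult_assoc, Rinv_l, Rmult_1_l by lra. pose proof (Rabs_pos rest). nra. }
  pose proof (Rmult_le_pos _ _ Hbm HbQ). pose proof (Rabs_pos (c * rest / INR L)). nra.
Qed.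

Lemma nrm_CCF_le Nh : nrm_CCF L Nh H b l i <= INR (S Nh) * (b ^ Nh / b ^ L) ^ 2.
Proof.
  unfold nrm_CCF. rewrite sum_n_psum, <- psum_const. apply psum_le.
  intros m Hm. apply pow_maj_Rabs, column_CCF_bound. lia.
Qed.
End CrossTerms.
End ColumnSums.

(** * The output SNR with perfect feedback *)

Lemma nrm_CCF_ge0 L Nh H b l i : 0 <= nrm_CCF L Nh H b l i.
Proof.
  unfold nrm_CCF. rewrite sum_n_psum. apply psum_ge0. intros; apply pow2_ge_0.
Qed.

Definition cross_interference L H b l Nh : R :=
  sum_n (fun i => if Nat.eqb i l then 0 else nrm_CCF L Nh H b l i) (L - 1).

Definition SNR_denominator L H sb2 b l Nh : R :=
  sb2 * (nrm_IF L Nh b + cross_interference L H b l Nh).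

Lemma SNR_perfect_feedback L H P sb2 b g N l :
  SNR L H P sb2 0 b g N l = P * (1 - g) / INR L * INR N / SNR_denominator L H sb2 b l (N - L).
Proof.
  unfold SNR, SNR_denominator, cross_interference, Rdiv. cbv zeta.
  f_equal; [ring | f_equal; ring].
Qed.

Lemma pow_inv_sqr_split b L N : (L <= N)%nat ->
  (/ b ^ 2) ^ N = / ((b ^ (N - L)) ^ 2 * b ^ (2 * L)).
Proof.
  intros HN. rewrite pow_inv. f_equal.
  rewrite <- !pow_mult, <- pow_add. f_equal. lia.
Qed.

Lemma Rabs_pm1 x : x = 1 \/ x = -1 -> Rabs x = 1.
Proof. intros [-> | ->]; [apply Rabs_R1 | rewrite Rabs_left; lra]. Qed.

Lemma ln2_pos : 0 < ln 2.
Proof. rewrite <- ln_1. apply ln_increasing; lra. Qed.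

Lemma log2_increasing x y : 0 < x < y -> log2 x < log2 y.
Proof.
  intros Hxy. unfold log2, Rdiv. apply Rmult_lt_compat_r.
  - apply Rinv_0_lt_compat, ln2_pos.
  - apply ln_increasing; lra.
Qed.

Lemma lt_neg_log2_iff Rl x : 0 < x -> Rl < - log2 x <-> x < Rpower 2 (- Rl).
Proof.
  intros Hx. pose proof ln2_pos. unfold log2, Rpower.
  rewrite <- (exp_ln x) at 2 by auto.
  split; intros Hlt.
  - apply exp_increasing.
    apply Rmult_lt_compat_r with (r := ln 2) in Hlt; auto.
    replace (- (ln x / ln 2) * ln 2) with (- ln x) in Hlt by (field; lra). lra.
  - apply exp_lt_inv in Hlt. apply Rmult_lt_reg_r with (ln 2); auto.
    replace (- (ln x / ln 2) * ln 2) with (- ln x) by (field; lra). lra.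
Qed.

Lemma Rpower_rate_mul_sqr Rl b : 0 < b ->
  Rpower 2 (2 * Rl) * b ^ 2 = exp (2 * ln 2 * (Rl + log2 b)).
Proof.
  intros Hb. pose proof ln2_pos.
  replace (b ^ 2) with (exp (ln b + ln b)) by (rewrite exp_plus, exp_ln by auto; ring).
  unfold Rpower, log2. rewrite <- exp_plus. f_equal. field. lra.
Qed.

Lemma Pe_as_power L H P sb2 sf2 b g Rl N l :
  Pe L H P sb2 sf2 b g Rl N l
  = 2 * (1 - 1 / Rpower 2 (2 * Rl) ^ N)
      * Qfun (sqrt (6 / (Rpower 2 (2 * Rl) ^ N - 1) * SNR L H P sb2 sf2 b g N l)).
Proof.
  unfold Pe. cbv zeta.
  replace (2 * INR N * Rl) with (2 * Rl * INR N) by ring.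
  rewrite <- Rpower_mult, Rpower_pow by apply exp_pos. reflexivity.
Qed.

Section PerfectFeedback.
Variables (L : nat) (H : nat -> nat -> R) (P sb2 b g : R).
Hypothesis L_pos : (0 < L)%nat.
Hypothesis H_hadamard : is_hadamard L H.
Hypothesis sb2_pos : 0 < sb2.
Hypothesis P_pos : 0 < P.
Hypothesis b_range : 0 < b < 1.
Hypothesis g_range : 0 < g < 1.

Lemma cross_interference_bounds l Nh : (l < L)%nat ->
  0 <= cross_interference L H b l Nh <= INR L * (INR (S Nh) * (b ^ Nh / b ^ L) ^ 2).
Proof.
  intros Hl. destruct H_hadamard as [Hpm Horth].
  unfold cross_interference. rewrite sum_n_psum. replace (S (L - 1)) with L by lia.
  split.
  - apply psum_ge0. intros i _. destruct (Nat.eqb_spec i l); [lra | apply nrm_CCF_ge0].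
  - rewrite <- psum_const. apply psum_le. intros i Hi. destruct (Nat.eqb_spec i l).
    + apply Rmult_le_pos; [apply pos_INR | apply pow2_ge_0].
    + apply nrm_CCF_le; auto.
      * intros k Hk. rewrite Rabs_mult, !Rabs_pm1 by auto. lra.
      * specialize (Horth l i Hl Hi). destruct (Nat.eqb_spec l i); [lia | auto].
Qed.

Lemma SNR_denominator_bounds l Nh : (l < L)%nat ->
  sb2 * (b ^ Nh) ^ 2 <= SNR_denominator L H sb2 b l Nh
  <= sb2 * ((1 + INR L) * (INR (S Nh) * (b ^ Nh / b ^ L) ^ 2)).
Proof.
  intros Hl. unfold SNR_denominator.
  pose proof (nrm_IF_ge L b L_pos b_range Nh). pose proof (nrm_IF_le L b L_pos b_range Nh).
  pose proof (cross_interference_bounds l Nh Hl).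
  split; apply Rmult_le_compat_l; lra.
Qed.

Let G := P * (1 - g) / INR L.

Lemma SNR_gain_pos : 0 < G.
Proof. apply Rdiv_lt_0_compat; [nra | apply lt_0_INR; auto]. Qed.

Lemma SNR_ge0 l N : (l < L)%nat -> 0 <= SNR L H P sb2 0 b g N l.
Proof.
  intros Hl. rewrite SNR_perfect_feedback. fold G.
  pose proof (SNR_denominator_bounds l (N - L) Hl). pose proof SNR_gain_pos.
  pose proof (pow_lt (b ^ (N - L)) 2 (pow_lt b _ (proj1 b_range))).
  apply Rdiv_le_0_compat; [apply Rmult_le_pos; [lra | apply pos_INR] | nra].
Qed.

Lemma SNR_le l N : (l < L)%nat -> (L <= N)%nat ->
  SNR L H P sb2 0 b g N l <= G * b ^ (2 * L) / sb2 * INR N * (/ b ^ 2) ^ N.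
Proof.
  intros Hl HN. rewrite SNR_perfect_feedback, (pow_inv_sqr_split b L N HN). fold G.
  pose proof (SNR_denominator_bounds l (N - L) Hl). pose proof SNR_gain_pos.
  set (u := b ^ (N - L)) in *.
  assert (0 < u) by (apply pow_lt; lra). pose proof (pow_lt b (2 * L) ltac:(lra)).
  apply Rle_trans with (G * INR N / (sb2 * u ^ 2)).
  - apply Rmult_le_compat_l; [apply Rmult_le_pos; [lra | apply pos_INR] |].
    apply Rinv_le_contravar; [apply Rmult_lt_0_compat; [| apply pow_lt] |]; lra.
  - right. field. repeat split; lra.
Qed.

Lemma SNR_ge l N : (l < L)%nat -> (L <= N)%nat ->
  G * (b ^ (2 * L)) ^ 2 / (sb2 * (1 + INR L)) * (/ b ^ 2) ^ N <= SNR L H P sb2 0 b g N l.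
Proof.
  intros Hl HN. rewrite SNR_perfect_feedback, (pow_inv_sqr_split b L N HN). fold G.
  pose proof (SNR_denominator_bounds l (N - L) Hl) as Hden. pose proof SNR_gain_pos.
  assert (HSN : 0 < INR (S (N - L)) <= INR N) by (split; [apply lt_0_INR | apply le_INR]; lia).
  replace (b ^ (2 * L)) with ((b ^ L) ^ 2) by (rewrite <- pow_mult; f_equal; lia).
  set (u := b ^ (N - L)) in *. set (B := b ^ L) in *.
  assert (0 < u) by (apply pow_lt; lra). assert (0 < B) by (apply pow_lt; lra).
  assert (0 < sb2 * u ^ 2) by (apply Rmult_lt_0_compat; [| apply pow_lt]; lra).
  assert (HX : sb2 * ((1 + INR L) * (INR (S (N - L)) * (u / B) ^ 2))
               <= sb2 * ((1 + INR L) * (INR N * (u / B) ^ 2))).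
  { pose proof (pos_INR L). apply Rmult_le_compat_l; [lra |].
    apply Rmult_le_compat_l; [lra |]. apply Rmult_le_compat_r; [apply pow2_ge_0 | lra]. }
  apply Rle_trans with (G * INR N / (sb2 * ((1 + INR L) * (INR N * (u / B) ^ 2)))).
  - right. field. repeat split; try lra. pose proof (pos_INR L). lra.
  - apply Rmult_le_compat_l; [apply Rmult_le_pos; [lra | apply pos_INR] |].
    apply Rinv_le_contravar; lra.
Qed.

Variable Rl : R.
Hypothesis Rl_pos : 0 < Rl.

Let a := Rpower 2 (2 * Rl).

Lemma rate_base_gt1 : 1 < a.
Proof.
  unfold a, Rpower. rewrite <- exp_0. apply exp_increasing.
  pose proof ln2_pos. nra.
Qed.

Lemma Pe_vanishes l : (l < L)%nat -> Rl < - log2 b ->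
  is_lim_seq (fun N => Pe L H P sb2 0 b g Rl N l) 0.
Proof.
  intros Hl Hrate. pose proof rate_base_gt1. pose proof ln2_pos.
  assert (Hab : 0 < a * b ^ 2 < 1).
  { split; [apply Rmult_lt_0_compat; [lra | apply pow_lt; lra] |].
    unfold a. rewrite Rpower_rate_mul_sqr, <- exp_0 by lra. apply exp_increasing. nra. }
  set (K0 := G * (b ^ (2 * L)) ^ 2 / (sb2 * (1 + INR L))).
  assert (HK0 : 0 < K0).
  { pose proof SNR_gain_pos. pose proof (pos_INR L). pose proof (pow_lt b (2 * L) ltac:(lra)).
    unfold K0. apply Rdiv_lt_0_compat; [apply Rmult_lt_0_compat, pow_lt |]; nra. }
  apply is_lim_seq_ext with
    (fun N => 2 * (1 - 1 / a ^ N) * Qfun (sqrt (6 / (a ^ N - 1) * SNR L H P sb2 0 b g N l))).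
  { intros N. symmetry. apply Pe_as_power. }
  apply error_rate_vanishes; [intros N; apply pow_R1_Rle; lra |].
  apply is_lim_seq_le_p_loc with (fun N => (/ (a * b ^ 2)) ^ N * (6 * K0)).
  - exists L. intros N HN.
    assert (Han : 1 < a ^ N) by (apply Rlt_pow_R1; [lra | lia]).
    pose proof (SNR_ge l N Hl HN) as HSNR. fold K0 in HSNR.
    assert (0 < (/ b ^ 2) ^ N) by (apply pow_lt, Rinv_0_lt_compat, pow_lt; lra).
    rewrite Rinv_mult, Rpow_mult_distr, pow_inv.
    apply Rle_trans with (6 / a ^ N * (K0 * (/ b ^ 2) ^ N)); [right; field; lra |].
    apply Rmult_le_compat; [apply Rdiv_le_0_compat; lra | nra | | auto].
    apply Rmult_le_compat_l; [lra |]. apply Rinv_le_contravar; lra.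
  - eapply is_lim_seq_mult; [apply is_lim_seq_geom_p | apply is_lim_seq_const |].
    + rewrite <- Rinv_1. apply Rinv_lt_contravar; lra.
    + apply is_Rbar_mult_p_infty_pos. simpl. lra.
Qed.

Lemma Pe_not_vanishing : - log2 b < Rl -> ~ is_lim_seq (fun N => Pe L H P sb2 0 b g Rl N 0) 0.
Proof.
  intros Hrate Hlim. pose proof rate_base_gt1. pose proof ln2_pos.
  assert (Hab : 1 < a * b ^ 2).
  { unfold a. rewrite Rpower_rate_mul_sqr, <- exp_0 by lra. apply exp_increasing. nra. }
  assert (Hsigma : 0 < / (a * b ^ 2) < 1).
  { split; [apply Rinv_0_lt_compat; lra |]. rewrite <- Rinv_1. apply Rinv_lt_contravar; lra. }
  set (K1 := G * b ^ (2 * L) / sb2).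
  apply (error_rate_not_vanishing (fun N => a ^ N)
           (fun N => 6 / (a ^ N - 1) * SNR L H P sb2 0 b g N 0)).
  - apply is_lim_seq_geom_p. lra.
  - apply is_lim_seq_le_le_loc with (fun _ => 0) (fun N => 12 * K1 * (INR N * (/ (a * b ^ 2)) ^ N)).
    + destruct (proj2 (is_lim_seq_spec _ _) (is_lim_seq_geom_p a ltac:(lra)) 2) as [N1 HN1].
      exists (Nat.max L N1). intros N HN. specialize (HN1 N ltac:(lia)).
      pose proof (SNR_ge0 0 N L_pos) as HSNR0.
      pose proof (SNR_le 0 N L_pos ltac:(lia)) as HSNR. fold K1 in HSNR.
      split; [apply Rmult_le_pos; [apply Rdiv_le_0_compat |]; lra |].
      rewrite Rinv_mult, Rpow_mult_distr, pow_inv.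
      apply Rle_trans with (12 / a ^ N * (K1 * INR N * (/ b ^ 2) ^ N)); [| right; field; lra].
      apply Rmult_le_compat; [apply Rdiv_le_0_compat; lra | auto | | auto].
      apply Rmult_le_reg_r with ((a ^ N - 1) * a ^ N); [nra |].
      unfold Rdiv. field_simplify; lra.
    + apply is_lim_seq_const.
    + replace (Finite 0) with (Rbar_mult (12 * K1) 0) by (simpl; f_equal; ring).
      apply is_lim_seq_scal_l, is_lim_seq_INR_mul_geom. auto.
  - eapply is_lim_seq_ext; [| exact Hlim]. intros N. apply Pe_as_power.
Qed.
End PerfectFeedback.

(** * The beta-equation and the maximum sum rate *)

Definition beta_lhs (L : nat) (x : R) : R :=
  (1 - x ^ (2 * L)) ^ 2 / (INR L ^ 2 * x ^ (2 * L) * (1 - x ^ 2)).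

Lemma sqr_geom_ratio_psum n u : 0 < u < 1 ->
  (1 - u ^ n) ^ 2 / (u ^ n * (1 - u)) = psum (fun k => / u ^ S k - u ^ k) n.
Proof.
  intros Hu. induction n as [| n IH].
  - simpl. field. lra.
  - rewrite psum_S, <- IH. assert (0 < u ^ n) by (apply pow_lt; lra).
    simpl. field. repeat split; lra.
Qed.

Lemma beta_lhs_psum L x : (0 < L)%nat -> 0 < x < 1 ->
  beta_lhs L x = psum (fun k => / (x ^ 2) ^ S k - (x ^ 2) ^ k) L / INR L ^ 2.
Proof.
  intros HL Hx. assert (Hx2 : 0 < x ^ 2 < 1) by (split; [apply pow_lt |]; nra).
  rewrite <- sqr_geom_ratio_psum by auto. unfold beta_lhs. rewrite pow_mult.
  assert (0 < INR L) by (apply lt_0_INR; auto). pose proof (pow_lt (x ^ 2) L (proj1 Hx2)).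
  field. repeat split; lra.
Qed.

Lemma beta_lhs_pos L x : (0 < L)%nat -> 0 < x < 1 -> 0 < beta_lhs L x.
Proof.
  intros HL Hx. rewrite beta_lhs_psum by auto.
  assert (Hx2 : 0 < x ^ 2 < 1) by (split; [apply pow_lt |]; nra).
  apply Rdiv_lt_0_compat; [| apply pow_lt, lt_0_INR; auto].
  rewrite <- (Rmult_0_r (INR L)), <- psum_const. apply psum_lt; auto.
  intros k _. pose proof (pow_lt_1_compat (x ^ 2) (S k) ltac:(lra) ltac:(lia)).
  pose proof (pow_lt (x ^ 2) (S k) ltac:(lra)).
  assert (1 < / (x ^ 2) ^ S k) by (rewrite <- Rinv_1; apply Rinv_lt_contravar; nra).
  pose proof (pow_incr (x ^ 2) 1 k ltac:(lra)). rewrite pow1 in *. lra.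
Qed.

Lemma pow_lt_pow_l x y n : 0 <= x < y -> x ^ S n < y ^ S n.
Proof.
  intros Hxy. induction n as [| n IH]; [simpl; lra |].
  rewrite <- !(tech_pow_Rmult _ (S n)).
  apply Rmult_le_0_lt_compat; try lra. apply pow_le; lra.
Qed.

Lemma beta_lhs_decreasing L x y : (0 < L)%nat -> 0 < x < y -> y < 1 -> beta_lhs L y < beta_lhs L x.
Proof.
  intros HL Hxy Hy. rewrite !beta_lhs_psum by (auto || lra).
  apply Rmult_lt_compat_r; [apply Rinv_0_lt_compat, pow_lt, lt_0_INR; auto |].
  assert (Hx2 : 0 < x ^ 2 < y ^ 2) by (split; [apply pow_lt |]; nra).
  apply psum_lt; auto. intros k _.
  pose proof (pow_lt_pow_l (x ^ 2) (y ^ 2) k ltac:(lra)).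
  pose proof (pow_incr (x ^ 2) (y ^ 2) k ltac:(lra)).
  pose proof (pow_lt (x ^ 2) (S k) ltac:(lra)).
  assert (/ (y ^ 2) ^ S k < / (x ^ 2) ^ S k) by (apply Rinv_lt_contravar; nra).
  lra.
Qed.

Lemma beta_lhs_lt_inv L x y : (0 < L)%nat -> 0 < x < 1 -> 0 < y < 1 ->
  beta_lhs L y < beta_lhs L x -> x < y.
Proof.
  intros HL Hx Hy Hlt. apply Rnot_le_lt. intros [Hyx | ->]; [| lra].
  pose proof (beta_lhs_decreasing L y x HL ltac:(lra) (proj2 Hx)). lra.
Qed.

Section MaximumSumRate.
Variables (L : nat) (H : nat -> nat -> R) (P sb2 binf : R).
Hypothesis L_pos : (0 < L)%nat.
Hypothesis H_hadamard : is_hadamard L H.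
Hypothesis P_pos : 0 < P.
Hypothesis sb2_pos : 0 < sb2.
Hypothesis binf_range : 0 < binf < 1.
Hypothesis binf_root : beta_lhs L binf = P / (sb2 * INR L).

Lemma achievable_le_log2 Rl : achievable L H P sb2 0 Rl -> Rl <= - log2 binf.
Proof.
  intros [HRl [g [Hg [b [Hb [Hroot Hlim]]]]]].
  change (beta_lhs L b = P * g / (INR L * (sb2 + 0))) in Hroot.
  assert (0 < INR L) by (apply lt_0_INR; auto).
  assert (Hbb : binf < b).
  { apply (beta_lhs_lt_inv L); auto. rewrite Hroot, binf_root, Rplus_0_r.
    apply Rmult_lt_reg_r with (INR L * sb2 / P); [apply Rdiv_lt_0_compat; nra |].
    replace (P * g / (INR L * sb2) * (INR L * sb2 / P)) with g by (field; lra).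
    replace (P / (sb2 * INR L) * (INR L * sb2 / P)) with 1 by (field; lra). lra. }
  assert (Rl <= - log2 b).
  { apply Rnot_lt_le. intros Hgt.
    apply (Pe_not_vanishing L H P sb2 b g L_pos H_hadamard sb2_pos P_pos Hb Hg Rl HRl Hgt).
    apply Hlim, L_pos. }
  pose proof (log2_increasing binf b ltac:(lra)). lra.
Qed.

Lemma achievable_below_log2 Rl : 0 < Rl < - log2 binf -> achievable L H P sb2 0 Rl.
Proof.
  intros [HRl Hlt]. apply lt_neg_log2_iff in Hlt; [| lra].
  (* Rather than solving the beta-equation for beta, choose beta and read gamma off it. *)
  assert (0 < INR L) by (apply lt_0_INR; auto).
  assert (Hlt1 : Rpower 2 (- Rl) < 1).
  { unfold Rpower. rewrite <- exp_0. apply exp_increasing. pose proof ln2_pos. nra. }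
  set (b := (binf + Rpower 2 (- Rl)) / 2).
  assert (Hb : 0 < b < 1) by (unfold b; lra).
  assert (Hrate : Rl < - log2 b) by (apply lt_neg_log2_iff; unfold b; lra).
  pose proof (beta_lhs_pos L b L_pos Hb).
  pose proof (beta_lhs_decreasing L binf b L_pos ltac:(unfold b; lra) (proj2 Hb)) as Hdec.
  set (g := beta_lhs L b * (INR L * sb2) / P).
  assert (Hg : 0 < g < 1).
  { unfold g. split.
    - apply Rdiv_lt_0_compat; [apply Rmult_lt_0_compat; nra | auto].
    - apply Rmult_lt_reg_r with (P / (INR L * sb2)); [apply Rdiv_lt_0_compat; nra |].
      replace (beta_lhs L b * (INR L * sb2) / P * (P / (INR L * sb2))) with (beta_lhs L b)
        by (field; lra).
      replace (1 * (P / (INR L * sb2))) with (beta_lhs L binf) by (rewrite binf_root; field; lra).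
      exact Hdec. }
  split; auto. exists g. split; auto. exists b. split; auto. split.
  - unfold beta_eq. fold (beta_lhs L b). unfold g. field. lra.
  - intros l Hl. apply Pe_vanishes; auto.
Qed.

Lemma sum_rate_le s : sum_rates L H P sb2 0 s -> s <= - INR L * log2 binf.
Proof.
  intros [Rl [Hach ->]]. pose proof (achievable_le_log2 Rl Hach).
  pose proof (pos_INR L). nra.
Qed.

Lemma sum_rate_approx x :
  x < - INR L * log2 binf -> exists s, sum_rates L H P sb2 0 s /\ x < s.
Proof.
  intros Hx. assert (0 < INR L) by (apply lt_0_INR; auto).
  assert (Hlog : 0 < - log2 binf).
  { pose proof (log2_increasing binf 1 ltac:(lra)). unfold log2 in *. rewrite ln_1 in *. lra. }
  assert (Hmax : Rmax (x / INR L) 0 < - log2 binf).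
  { apply Rmax_lub_lt; auto. apply Rmult_lt_reg_r with (INR L); auto.
    unfold Rdiv. rewrite Rmult_assoc, Rinv_l by lra. lra. }
  pose proof (Rmax_l (x / INR L) 0). pose proof (Rmax_r (x / INR L) 0).
  set (Rl := (Rmax (x / INR L) 0 + - log2 binf) / 2).
  exists (INR L * Rl). split.
  - exists Rl. split; auto. apply achievable_below_log2. unfold Rl. lra.
  - replace x with (INR L * (x / INR L)) by (field; lra).
    apply Rmult_lt_compat_l; auto. unfold Rl. lra.
Qed.
End MaximumSumRate.

Lemma is_lub_approx (S : R -> Prop) (m : R) :
  (forall s, S s -> s <= m) -> (forall x, x < m -> exists s, S s /\ x < s) -> is_lub S m.
Proof.
  intros Hub Happrox. split; [exact Hub |].
  intros m' Hm'. apply Rnot_lt_le. intros Hlt.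
  destruct (Happrox m' Hlt) as [s [Hs Hm's]]. specialize (Hm' s Hs). lra.
Qed.

Theorem lemma2 (k L : nat) (H : nat -> nat -> R) (P sb2 : R) :
  L = (2 ^ k)%nat ->
  is_hadamard L H ->
  0 < P -> 0 < sb2 ->
  forall binf : R, 0 < binf < 1 ->
    beta_eq L binf (P / (sb2 * INR L)) ->
    is_lub (sum_rates L H P sb2 0) (- INR L * log2 binf).
Proof.
  intros HLk Hhad HP Hsb binf Hbinf Hroot.
  assert (L_pos : (0 < L)%nat) by (subst; apply Nat.neq_0_lt_0, Nat.pow_nonzero; lia).
  apply is_lub_approx.
  - exact (sum_rate_le L H P sb2 binf L_pos Hhad HP Hsb Hbinf Hroot).
  - exact (sum_rate_approx L H P sb2 binf L_pos Hhad HP Hsb Hbinf Hroot).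
Qed.
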